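(* For every integer $n\geqslant3$, the generalized quaternion group $Q_{2^n}=\langle x,y\mid x^{2^{n-1}}=1,\ y^2=x^{2^{n-2}},\ x^y=x^{-1}\rangle$ has a $2$-power-free decomposition.
   Context: The power graph $\mathcal{P}(G)$ of a finite group $G$ has vertex set $G$, two distinct elements being adjacent when one is a power of the other. An $n$-power-free decomposition of $G$ ($n\geqslant1$) is a partition $G=C\uplus B_1\uplus\cdots\uplus B_n$ of $G$ into a cyclic $p$-subgroup $C$ of maximal order (for some prime $p$) and $n$ nonempty subsets $B_1,\ldots,B_n$ such that each $B_i$ is an independent set (pairwise nonadjacent vertices) of $\mathcal{P}(G)$ and $|B_i|>1$ for each $i$. *)

From mathcomp Require Import all_boot all_fingroup all_solvable.
Set Implicit Arguments. Unset Strict Implicit. Unset Printing Implicit Defensive.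
Local Open Scope group_scope.

Section PowerGraph.
Variable gT : finGroupType.

Definition power_adj (x y : gT) : Prop :=
  x != y /\ ((exists k : nat, x = y ^+ k) \/ (exists k : nat, y = x ^+ k)).

Definition power_independent (B : {set gT}) : Prop :=
  forall x y, x \in B -> y \in B -> ~ power_adj x y.

Definition power_free_decomposition (G : {group gT}) (n : nat) : Prop :=
  1 <= n /\
  exists (p : nat) (C : {group gT}) (B : 'I_n -> {set gT}),
    [/\ prime p, C \subset G, cyclic C, p.-group C &
        (forall D : {group gT}, D \subset G -> cyclic D -> p.-group D ->
            #|D| <= #|C|)] /\
    [/\ G :=: C :|: \bigcup_(i < n) B i,
        (forall i, [disjoint C & B i]),
        (forall i j, i != j -> [disjoint B i & B j])
      & (forall i, 1 < #|B i| /\ power_independent (B i))].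
End PowerGraph.

From mathcomp Require Import all_boot all_fingroup all_solvable.
From mathcomp Require Import zify.
Set Implicit Arguments. Unset Strict Implicit. Unset Printing Implicit Defensive.
Local Open Scope group_scope.

(* In Q_(2^n) = <x, y> the cyclic subgroup <x> of index 2 has order 2^(n-1),
   while every element t outside it has order 4 and t^-1 = x^(2^(n-2)) t; hence
   <x> is a cyclic 2-subgroup of maximal order. Two distinct elements of order 4
   are adjacent in the power graph only when they are mutually inverse, so the
   coset <x>y splits into the two independent sets
   B = {x^j y | j < 2^(n-2)} and B^-1 = {x^j y | 2^(n-2) <= j < 2^(n-1)}. *)

Section PowerGraphOrderFour.
Variable gT : finGroupType.
Implicit Types (s t : gT) (B : {set gT}).

Definition max_cyclic_pgroup p (G C : {group gT}) :=
  [/\ prime p, C \subset G, cyclic C, p.-group C &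
      forall D : {group gT}, D \subset G -> cyclic D -> p.-group D -> #|D| <= #|C|].

Lemma order4_expg_inv t k :
  #[t] = 4 -> #[t ^+ k] = 4 -> t ^+ k != t -> t ^+ k = t^-1.
Proof.
rewrite -(expg_mod_order t k) invg_expg => ot; rewrite ot.
have : k %% 4 < 4 by rewrite ltn_mod.
case: (k %% 4) => [|[|[|[|//]]]] _ //.
- by rewrite order1.
- by rewrite expg1 eqxx.
- by rewrite orderXdiv ot.
Qed.

Lemma power_adj_order4 s t : #[s] = 4 -> #[t] = 4 -> power_adj s t -> s = t^-1.
Proof.
move=> os ot [neq_st [[k def_s] | [k def_t]]].
  by rewrite def_s order4_expg_inv // -def_s.
by rewrite def_t order4_expg_inv ?invgK // -def_t // eq_sym.
Qed.

Lemma power_independent_order4 B :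
  {in B, forall t, #[t] = 4} -> [disjoint B & B^-1] -> power_independent B.
Proof.
move=> oB disB s t sB tB /(power_adj_order4 (oB s sB) (oB t tB)) def_s.
have : t \in B^-1 by rewrite mem_invg -def_s.
by rewrite (disjointFr disB tB).
Qed.

Lemma inv_pair_power_free_decomposition p (G C : {group gT}) B :
    max_cyclic_pgroup p G C -> G :\: C = B :|: B^-1 -> [disjoint B & B^-1] ->
    {in B, forall t, #[t] = 4} -> 1 < #|B| ->
  power_free_decomposition G 2.
Proof.
move=> maxC defB disB oB B_gt1; have [_ sCG _ _ _] := maxC.
have oBV : {in B^-1, forall t, #[t] = 4}.
  by move=> t; rewrite mem_invg => /oB; rewrite orderV.
have disBV : [disjoint B^-1 & B^-1^-1] by rewrite invgK disjoint_sym.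
have disC (A : {set gT}) : A \subset B :|: B^-1 -> [disjoint C & A].
  move=> sA; rewrite disjoint_sym disjoint_subset (subset_trans sA) // -defB.
  by apply/subsetP => t /setDP[_ nCt]; rewrite inE.
split=> //; exists p, C, (fun i : 'I_2 => if i == ord0 then B else B^-1).
split=> //; split.
- by rewrite big_ord_recl big_ord1 /= -defB -{1}(setID G C) (setIidPr sCG).
- by move=> [[|[|//]]] _ /=; apply: disC; rewrite (subsetUl, subsetUr).
- by move=> [[|[|//]]] ? [[|[|//]]] ? //= _; rewrite disjoint_sym.
- move=> [[|[|//]]] _ /=; last rewrite card_invg.
  all: by split; last exact: power_independent_order4.
Qed.

End PowerGraphOrderFour.

Section QuaternionInversePair.
Variables (gT : finGroupType) (G : {group gT}) (n : nat) (x y : gT).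
Hypotheses (n_gt2 : 2 < n) (isoG : G \isog 'Q_(2 ^ n))
           (genG : extremal_generators G 2 n (x, y)).

Local Notation X := <[x]>.
Let r := (2 ^ n.-2)%N.

Definition quaternion_half_coset := [set x ^+ j * y | j : 'I_r].
Local Notation B := quaternion_half_coset.

Let r_gt1 : 1 < r.
Proof. by rewrite /r (ltn_exp2l 0) //; lia. Qed.

Let order_x : #[x] = (2 * r)%N.
Proof. by case: genG => _ _ -> _; rewrite /r -expnS; congr (2 ^ _)%N; lia. Qed.

Lemma quaternion_coset : X :* y = G :\: X.
Proof.
case: genG => oG Gx _ X'y; apply: rcoset_index2; rewrite ?cycle_subG //.
rewrite -divgS ?cycle_subG // oG -orderE order_x.
have -> : (2 ^ n = 2 * (2 * r))%N by rewrite /r -!expnS; congr (2 ^ _)%N; lia.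
by rewrite mulnK //; lia.
Qed.

Lemma order_quaternion_coset : {in G :\: X, forall t, #[t] = 4}.
Proof. by have [[_ oX _] _ _ _ _] := quaternion_structure n_gt2 genG isoG. Qed.

Lemma invg_quaternion_coset t : t \in G :\: X -> t^-1 = x ^+ r * t.
Proof.
move=> X't; have ot := order_quaternion_coset X't.
have [_ _ [_ _ involution_x _ _] _ _] := quaternion_structure n_gt2 genG isoG.
have t2 : t ^+ 2 = x ^+ r.
  by apply: involution_x; [rewrite groupX //; case/setDP: X't | rewrite orderXdiv ot].
by rewrite invg_expg ot expgSr t2.
Qed.

Lemma invg_expg_quaternion_coset i : (x ^+ i * y)^-1 = x ^+ (r + i) * y.
Proof.
rewrite invg_quaternion_coset ?mulgA ?expgD // -quaternion_coset.
by apply/rcosetP; exists (x ^+ i); rewrite ?mem_cycle.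
Qed.

Lemma mem_quaternion_half_coset i : (x ^+ i * y \in B) = (i %% (2 * r) < r)%N.
Proof.
apply/imsetP/idP => [[j _ /mulIg/eqP] | lt_ir].
  rewrite eq_expg_mod_order order_x (modn_small (_ : j < 2 * r)%N) => [/eqP-> //|].
  by have := ltn_ord j; lia.
by exists (Ordinal lt_ir); rewrite //= -{1}(expg_mod_order x i) order_x.
Qed.

Lemma quaternion_half_coset_sub : B \subset G :\: X.
Proof.
rewrite -quaternion_coset; apply/subsetP => _ /imsetP[j _ ->].
by apply/rcosetP; exists (x ^+ j); rewrite ?mem_cycle.
Qed.

Lemma invg_mem_quaternion_half_coset t :
  t \in G :\: X -> (t^-1 \in B) = (t \notin B).
Proof.
rewrite -quaternion_coset => /rcosetP[_ /cycleP[i ->] ->].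
rewrite invg_expg_quaternion_coset !mem_quaternion_half_coset -modnDmr.
have : (i %% (2 * r) < 2 * r)%N by rewrite ltn_mod; lia.
move: (i %% (2 * r))%N => k lt_k; case: (ltnP k r) => [lt_kr | le_rk].
  by rewrite modn_small //; lia.
rewrite -[(r + k)%N](@subnKC (2 * r)) ?modnDl ?modn_small; lia.
Qed.

Lemma quaternion_coset_inv_pair : G :\: X = B :|: B^-1.
Proof.
apply/eqP; rewrite eqEsubset subUset quaternion_half_coset_sub /=.
apply/andP; split.
  apply/subsetP => t X't; rewrite inE mem_invg invg_mem_quaternion_half_coset //.
  exact: orbN.
by rewrite -invSg invgK invDg !invGid quaternion_half_coset_sub.
Qed.

Lemma disjoint_quaternion_half_coset_inv : [disjoint B & B^-1].
Proof.
rewrite disjoint_subset; apply/subsetP => t tB.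
rewrite inE mem_invg invg_mem_quaternion_half_coset ?tB //.
exact: subsetP quaternion_half_coset_sub t tB.
Qed.

Lemma card_quaternion_half_coset : #|B| = r.
Proof.
rewrite card_imset ?card_ord // => j k /mulIg/eqP.
have ltj := ltn_ord j; have ltk := ltn_ord k.
rewrite eq_expg_mod_order order_x !modn_small => [/eqP/val_inj // | | ]; lia.
Qed.

Lemma quaternion_max_cyclic : max_cyclic_pgroup 2 G X.
Proof.
have Gx : x \in G by case: genG.
split; rewrite ?cycle_subG ?cycle_cyclic //.
  by rewrite /pgroup -orderE order_x /r -expnS pnatX.
move=> D sDG /cyclicP[d defD] _; rewrite defD.
have Gd : d \in G by rewrite -cycle_subG -defD.
have [Xd | X'd] := boolP (d \in X).
  by rewrite subset_leq_card // cycle_subG.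
by rewrite -!orderE order_quaternion_coset ?inE ?X'd // order_x; lia.
Qed.

Lemma quaternion_power_free_decomposition : power_free_decomposition G 2.
Proof.
apply: (inv_pair_power_free_decomposition quaternion_max_cyclic).
- exact: quaternion_coset_inv_pair.
- exact: disjoint_quaternion_half_coset_inv.
- by move=> t /(subsetP quaternion_half_coset_sub); apply: order_quaternion_coset.
- by rewrite card_quaternion_half_coset.
Qed.

End QuaternionInversePair.

Theorem proposition3p6 (n : nat) :
  3 <= n -> power_free_decomposition [set: 'Q_(2 ^ n)]%G 2.
Proof.
move=> n_gt2; have isoQ := isog_refl [set: 'Q_(2 ^ n)]%G.
have [[x y] genQ _] := generators_quaternion n_gt2 isoQ.
exact: quaternion_power_free_decomposition n_gt2 isoQ genQ.
Qed.
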